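(* For $u=(u_1,\dots,u_n)$ and $v=(v_1,\dots,v_n)$, \begin{multline*} \sum_{w\in\mathfrak S_u\times\mathfrak S_v}w\biggl(\prod_{i=1}^n\frac{1}{u_i-tv_i}\prod_{1\le i<j\le n}\frac{u_i-tu_j}{u_i-u_j}\cdot\frac{u_i-v_j}{u_i-tv_j}\cdot\frac{v_i-tv_j}{v_i-v_j}\biggr)\\ =\frac{(t;t)_n}{(1-t)^n}\sum_{w\in\mathfrak S_v}w\biggl(\prod_{i=1}^n\frac{1}{u_i-tv_i}\prod_{1\le i<j\le n}\frac{u_i-v_j}{u_i-tv_j}\cdot\frac{v_i-tv_j}{v_i-v_j}\biggr). \end{multline*}
   Context: $\mathfrak S_u$ (resp. $\mathfrak S_v$) is the symmetric group acting by permuting the variables $u_1,\dots,u_n$ (resp. $v_1,\dots,v_n$), and $\mathfrak S_u\times\mathfrak S_v$ permutes both sets independently; $w(f)$ denotes the function obtained by permuting variables. $(t;t)_n=(1-t)(1-t^2)\cdots(1-t^n)$. *)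

From HB Require Import structures.
From mathcomp Require Import all_boot all_order all_algebra all_fingroup.
Set Implicit Arguments. Unset Strict Implicit. Unset Printing Implicit Defensive.
Import Order.TTheory GRing.Theory Num.Theory.
Local Open Scope ring_scope.

Definition qpoch (R : ringType) (t : R) (n : nat) : R :=
  \prod_(i < n) (1 - t ^+ i.+1).

Definition lhs_fun (R : fieldType) (n : nat) (t : R) (u v : 'I_n -> R) : R :=
  (\prod_(i < n) (u i - t * v i)^-1) *
  \prod_(i < n) \prod_(j < n | (i < j)%N)
     ((u i - t * u j) / (u i - u j) *
      ((u i - v j) / (u i - t * v j)) *
      ((v i - t * v j) / (v i - v j))).

Definition rhs_fun (R : fieldType) (n : nat) (t : R) (u v : 'I_n -> R) : R :=
  (\prod_(i < n) (u i - t * v i)^-1) *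
  \prod_(i < n) \prod_(j < n | (i < j)%N)
     (((u i - v j) / (u i - t * v j)) *
      ((v i - t * v j) / (v i - v j))).

From HB Require Import structures.
From mathcomp Require Import all_boot all_order all_algebra all_fingroup.
From mathcomp Require Import ring.
Set Implicit Arguments. Unset Strict Implicit. Unset Printing Implicit Defensive.
Import Order.TTheory GRing.Theory Num.Theory.
Local Open Scope ring_scope.

(* The summand of the left side factors as A(u) G(u, v) with
   A(u) = prod_(i < j) (u_i - t u_j) / (u_i - u_j) and G(u, v) the summand of the right
   side.  The sum H(u) of G(u, v) over the permutations of v is symmetric in u: expanding
   H along the first two entries (x, y) of v, exchanging u_1 and u_2 changes H by a sum
   over ordered pairs x <> y of a function antisymmetric in (x, y), which vanishes.  So the
   left side is H(u) times the sum of A over the permutations of u, which is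
   [n]_t! = (t;t)_n / (1 - t)^n: expanding along the first entry x gives
   [n]_t! = [n-1]_t! * sum_x prod_(z <> x) (x - t z) / (x - z), and this last sum is
   1 + t + ... + t^(n-1) by a partial fraction expansion in x. *)

Lemma remC (T : eqType) (x y : T) (s : seq T) : rem x (rem y s) = rem y (rem x s).
Proof.
elim: s => //= z s IH.
have [zy | zy] := eqVneq z y; have [zx | zx] := eqVneq z x => /=.
- by rewrite -zx -zy.
- by rewrite zy eqxx.
- by rewrite zx eqxx.
- by rewrite (negbTE zx) (negbTE zy) IH.
Qed.

Section PermutationSums.
Variables (T : eqType) (M : nmodType).

Lemma perm_eq_map_perm n (f : 'I_n -> T) (s : 'S_n) :
  perm_eq [seq f (s i) | i <- enum 'I_n] [seq f i | i <- enum 'I_n].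
Proof.
rewrite (map_comp f s) perm_map // uniq_perm ?enum_uniq //.
  by rewrite map_inj_uniq ?enum_uniq //; apply: perm_inj.
move=> i; rewrite mem_enum; apply/mapP; exists (s^-1 i)%g; first by rewrite mem_enum.
by rewrite permKV.
Qed.

Lemma sum_perm_permutations n (f : 'I_n -> T) (F : seq T -> M) : injective f ->
  \sum_(s : 'S_n) F [seq f (s i) | i <- enum 'I_n]
  = \sum_(W <- permutations [seq f i | i <- enum 'I_n]) F W.
Proof.
move=> f_inj; rewrite -(big_map (fun s : 'S_n => [seq f (s i) | i <- enum 'I_n]) xpredT F).
apply: perm_big; apply: uniq_perm; last move=> W.
- rewrite map_inj_uniq ?index_enum_uniq // => s1 s2 /eq_in_map s12.
  by apply/permP => i; apply: f_inj; apply: s12; rewrite mem_enum.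
- exact: permutations_uniq.
rewrite mem_permutations; apply/mapP/idP => [[s _ ->]|]; first exact: perm_eq_map_perm.
have -> : [seq f i | i <- enum 'I_n] = [tuple f i | i < n] :> seq T by [].
case/tuple_permP => s ->; exists s; first by rewrite mem_index_enum.
by apply: eq_map => i; rewrite tnth_mktuple.
Qed.

Lemma sum_permutations_cons (F : seq T -> M) U : uniq U -> (0 < size U)%N ->
  \sum_(W <- permutations U) F W = \sum_(x <- U) \sum_(W <- permutations (rem x U)) F (x :: W).
Proof.
by move=> uU szU; rewrite (perm_big _ (permutationsE szU)) big_allpairs_dep undup_id.
Qed.

End PermutationSums.

(* The weights [x / (x - y)] and [y / (y - x)] add up to [1]; splitting along them
   avoids dividing by [2], so the lemma holds in every characteristic. *)
Lemma sum_pairs_antisym (R : fieldType) (V : seq R) (g : R -> R -> R) :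
  {in V &, forall x y, x != y -> g y x = - g x y} ->
  \sum_(x <- V) \sum_(y <- V | y != x) g x y = 0.
Proof.
move=> g_anti.
have split_g x y : y != x -> g x y = g x y * (x / (x - y)) + g x y * (y / (y - x)).
  move=> yx; have xy0 : x - y != 0 by rewrite subr_eq0 eq_sym.
  have yx0 : y - x != 0 by rewrite subr_eq0.
  by field; rewrite xy0 yx0.
under eq_bigr do under eq_bigr => y yx do rewrite (split_g _ _ yx).
under eq_bigr do rewrite big_split.
rewrite big_split /= (exchange_big_dep xpredT) //=.
apply/eqP; rewrite addr_eq0 -sumrN; apply/eqP.
apply: eq_big_seq => x xV; rewrite -sumrN big_seq_cond [RHS]big_seq_cond.
apply: eq_big => [y|y /andP[yV yx]]; first by rewrite eq_sym.
by rewrite g_anti ?mulNr.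
Qed.

Section TriangularProducts.
Variable R : comPzRingType.

Fixpoint triprod (d : R -> R -> R) (k : R -> R -> R -> R) (U W : seq R) : R :=
  match U, W with
  | a :: U', w :: W' => d a w * \prod_(z <- W') k a w z * triprod d k U' W'
  | _, _ => 1
  end.

Lemma triprod_enum n d k (x y : 'I_n -> R) :
  \prod_(i < n) d (x i) (y i) * \prod_(i < n) \prod_(j < n | (i < j)%N) k (x i) (y i) (y j)
  = triprod d k [seq x i | i <- enum 'I_n] [seq y i | i <- enum 'I_n].
Proof.
elim: n x y => [|n IH] x y; first by rewrite !big_ord0 enum_ord0 mulr1.
have enumS (f : 'I_n.+1 -> R) :
    map f (enum 'I_n.+1) = f ord0 :: map (f \o lift ord0) (enum 'I_n).
  by rewrite enum_ordSl /= map_comp.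
have inner (i : 'I_n.+1) (F : 'I_n.+1 -> R) :
    \prod_(j < n.+1 | (i < j)%N) F j = \prod_(j < n | (i <= j)%N) F (lift ord0 j).
  rewrite big_mkcond big_ord_recl ltn0 Monoid.mul1m [RHS]big_mkcond.
  by apply: eq_bigr => j _; rewrite lift0.
have inner0 (F : 'I_n.+1 -> R) :
  \prod_(j < n.+1 | (0 < j)%N) F j = \prod_(j < n) F (lift ord0 j) := inner ord0 F.
have innerS (i : 'I_n) (F : 'I_n.+1 -> R) :
  \prod_(j < n.+1 | (lift ord0 i < j)%N) F j = \prod_(j < n | (i < j)%N) F (lift ord0 j)
  := inner (lift ord0 i) F.
have prod_enum (F : 'I_n -> R) : \prod_(z <- map F (enum 'I_n)) k (x ord0) (y ord0) z
    = \prod_(j < n) k (x ord0) (y ord0) (F j).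
  by rewrite big_map big_enum.
rewrite !enumS /= -(IH (x \o lift ord0) (y \o lift ord0)) !big_ord_recl inner0 prod_enum.
under [X in _ * (_ * X)]eq_bigr do rewrite innerS.
rewrite /comp; ring.
Qed.

End TriangularProducts.

Definition tfactorial (R : pzSemiRingType) (t : R) n := \prod_(k < n) \sum_(i < k.+1) t ^+ i.

Lemma qpoch_tfactorial (R : comNzRingType) (t : R) n :
  qpoch t n = (1 - t) ^+ n * tfactorial t n.
Proof.
have -> : (1 - t) ^+ n = \prod_(k < n) (1 - t) by rewrite prodr_const card_ord.
rewrite /qpoch /tfactorial -big_split /=.
by apply: eq_bigr => k _; rewrite -opprB subrX1 -mulNr opprB.
Qed.

Section RationalIdentities.
Variables (R : fieldType) (t : R).

Definition pole (a w : R) := (a - t * w)^-1.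
Definition cross (a w z : R) := (a - z) / (a - t * z) * ((w - t * z) / (w - z)).
Definition tratio (W : seq R) (y : R) := \prod_(z <- W) ((y - t * z) / (y - z)).

Definition tsum U := \sum_(x <- U) tratio (rem x U) x.
Definition tresid U y := \sum_(x <- U) tratio (rem x U) x / (y - x).

Lemma tratio_rem_cons b U x : b \notin U -> x \in U ->
  tratio (rem x (b :: U)) x = (x - t * b) / (x - b) * tratio (rem x U) x.
Proof.
move=> bU xU; have bx : (b == x) = false by apply: contraNF bU => /eqP->.
by rewrite rem_cons bx /tratio big_cons.
Qed.

Lemma tsum_cons_rec b U : b \notin U ->
  tsum (b :: U) = tratio U b + tsum U - (1 - t) * b * tresid U b.
Proof.
move=> bU; rewrite /tsum big_cons /= eqxx -addrA; congr (_ + _).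
rewrite /tresid mulr_sumr -sumrB; apply: eq_big_seq => x xU.
have xb : x - b != 0 by rewrite subr_eq0; apply: contraNneq bU => <-.
have bx : b - x != 0 by rewrite -opprB oppr_eq0.
by rewrite tratio_rem_cons //; field; rewrite xb bx.
Qed.

Lemma tresid_cons_rec b U y : b \notin U -> y \notin U -> y != b ->
  tresid (b :: U) y = tratio U b / (y - b)
    + (y - t * b) / (y - b) * tresid U y - (1 - t) * b / (y - b) * tresid U b.
Proof.
move=> bU yU yb; rewrite /tresid big_cons /= eqxx -addrA; congr (_ + _).
rewrite !mulr_sumr -sumrB; apply: eq_big_seq => x xU.
have xb : x - b != 0 by rewrite subr_eq0; apply: contraNneq bU => <-.
have bx : b - x != 0 by rewrite -opprB oppr_eq0.
have yx : y - x != 0 by rewrite subr_eq0; apply: contraNneq yU => ->.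
have yb0 : y - b != 0 by rewrite subr_eq0.
by rewrite tratio_rem_cons //; field; rewrite xb bx yx yb0.
Qed.

Lemma tratio_partial_fraction U y : uniq U -> y \notin U ->
  tratio U y = 1 - (1 - t) * tsum U + (1 - t) * y * tresid U y.
Proof.
elim: U y => [|b U IH] y; first by rewrite /tratio /tsum /tresid !big_nil => _ _; ring.
rewrite /= inE negb_or => /andP[bU uU] /andP[yb yU].
have yb0 : y - b != 0 by rewrite subr_eq0.
rewrite tsum_cons_rec // tresid_cons_rec // {1}/tratio big_cons -/(tratio U y).
by rewrite (IH y) ?(IH b) //; field.
Qed.

Lemma tsum_cons b U : uniq (b :: U) -> tsum (b :: U) = 1 + t * tsum U.
Proof.
by case/andP => bU uU; rewrite tsum_cons_rec // tratio_partial_fraction //; ring.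
Qed.

Lemma tsum_uniq U : uniq U -> tsum U = \sum_(i < size U) t ^+ i.
Proof.
elim: U => [|b U IH] uU; first by rewrite /tsum big_nil big_ord0.
rewrite tsum_cons // IH; last by case/andP: uU.
by rewrite big_ord_recl mulr_sumr; congr (_ + _); apply: eq_bigr => i _; rewrite exprS.
Qed.

Definition tvdm_ratio W := triprod (fun _ _ => 1) (fun _ w z => (w - t * z) / (w - z)) W W.
Definition sym_tvdm_ratio U := \sum_(W <- permutations U) tvdm_ratio W.

Lemma sym_tvdm_ratio_cons U : uniq U -> (0 < size U)%N ->
  sym_tvdm_ratio U = \sum_(x <- U) tratio (rem x U) x * sym_tvdm_ratio (rem x U).
Proof.
move=> uU szU; rewrite /sym_tvdm_ratio sum_permutations_cons //.
apply: eq_bigr => x _; rewrite mulr_sumr; apply: eq_big_seq => W.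
by rewrite mem_permutations => pW; rewrite /tvdm_ratio /= mul1r; congr (_ * _); apply: perm_big.
Qed.

Lemma sym_tvdm_ratio_uniq U : uniq U -> sym_tvdm_ratio U = tfactorial t (size U).
Proof.
move sU: (size U) => n; elim: n U sU => [|n IH] U sU uU.
  by rewrite (size0nil sU) /sym_tvdm_ratio /= big_seq1 /tfactorial big_ord0.
rewrite sym_tvdm_ratio_cons ?sU //.
under eq_big_seq => x xU do rewrite IH ?rem_uniq ?size_rem ?sU //.
by rewrite -mulr_suml -/(tsum U) tsum_uniq // sU /tfactorial [RHS]big_ord_recr mulrC.
Qed.

Definition rhs_seq := triprod pole cross.
Definition sym_rhs_seq U V := \sum_(W <- permutations V) rhs_seq U W.

Definition head_factor a x W := pole a x * \prod_(z <- W) cross a x z.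

Lemma sym_rhs_seq_cons a U V : uniq V -> (0 < size V)%N ->
  sym_rhs_seq (a :: U) V = \sum_(x <- V) head_factor a x (rem x V) * sym_rhs_seq U (rem x V).
Proof.
move=> uV szV; rewrite /sym_rhs_seq sum_permutations_cons //.
apply: eq_bigr => x _; rewrite mulr_sumr; apply: eq_big_seq => W.
by rewrite mem_permutations => pW; congr (_ * _ * _); apply: perm_big.
Qed.

Definition swap_cofactor Z V a b x y :=
  let W := rem y (rem x V) in
  \prod_(z <- W) ((a - z) / (a - t * z)) * \prod_(z <- W) ((b - z) / (b - t * z)) *
  tratio W x * tratio W y * sym_rhs_seq Z W.

Lemma swap_cofactorC Z V a b x y : swap_cofactor Z V a b x y = swap_cofactor Z V b a x y.
Proof. by rewrite /swap_cofactor; ring. Qed.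

Lemma swap_cofactor_sym Z V a b x y : swap_cofactor Z V a b x y = swap_cofactor Z V a b y x.
Proof. by rewrite /swap_cofactor remC; ring. Qed.

Lemma sym_rhs_seq_cons2 a b Z V : uniq V -> (1 < size V)%N ->
  sym_rhs_seq (a :: b :: Z) V = \sum_(x <- V) \sum_(y <- V | y != x)
    pole a x * cross a x y * pole b y * swap_cofactor Z V a b x y.
Proof.
move=> uV szV; rewrite sym_rhs_seq_cons ?(ltnW szV) //; apply: eq_big_seq => x xV.
have szVx : (0 < size (rem x V))%N by rewrite size_rem // -ltnS (ltn_predK szV).
rewrite sym_rhs_seq_cons ?rem_uniq // mulr_sumr -[in RHS]big_filter -rem_filter //.
apply: eq_big_seq => y yVx; rewrite /head_factor (big_rem y yVx) /swap_cofactor /tratio.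
rewrite /cross !big_split /=; ring.
Qed.

Lemma pole_cross_antisym a b x y C :
  a != t * x -> a != t * y -> b != t * x -> b != t * y -> x != y ->
  pole a y * cross a y x * pole b x * C - pole b y * cross b y x * pole a x * C
  = - (pole a x * cross a x y * pole b y * C - pole b x * cross b x y * pole a y * C).
Proof.
move=> atx aty btx bty xy.
by rewrite /pole /cross; field; rewrite !subr_eq0 atx aty btx bty xy eq_sym xy.
Qed.

Lemma sym_rhs_seq_swap a b Z V : uniq V -> (1 < size V)%N ->
  {in [:: a; b] & V, forall c x, c != t * x} ->
  sym_rhs_seq (a :: b :: Z) V = sym_rhs_seq (b :: a :: Z) V.
Proof.
move=> uV szV abV; apply/eqP; rewrite -subr_eq0 !sym_rhs_seq_cons2 // -sumrB.
under eq_bigr do rewrite -sumrB.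
apply/eqP; apply: sum_pairs_antisym => x y xV yV xy.
rewrite !(swap_cofactorC Z V b a) !(swap_cofactor_sym Z V a b y x).
by apply: pole_cross_antisym; rewrite ?abV ?inE ?eqxx ?orbT.
Qed.

Lemma sym_rhs_seq_cons_congr c X Y V : uniq V -> (0 < size V)%N ->
  {in V, forall x, sym_rhs_seq X (rem x V) = sym_rhs_seq Y (rem x V)} ->
  sym_rhs_seq (c :: X) V = sym_rhs_seq (c :: Y) V.
Proof.
move=> uV szV XY; rewrite !sym_rhs_seq_cons //.
by apply: eq_big_seq => x xV; rewrite XY.
Qed.

Lemma sym_rhs_seq_perm U1 U2 V : perm_eq U1 U2 -> uniq U1 -> uniq V ->
  size U1 = size V -> {in U1 & V, forall a x, a != t * x} ->
  sym_rhs_seq U1 V = sym_rhs_seq U2 V.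
Proof.
move sV: (size V) => n; elim: n U1 U2 V sV => [|n IH] U1 U2 V sV pU uU uV sU hUV.
  rewrite (size0nil sV) /sym_rhs_seq; apply: eq_big_seq => W.
  rewrite mem_permutations => /perm_size/size0nil ->.
  by case: U1 U2 {pU uU sU hUV} => [|? ?] [|? ?].
have congr_tail c X Y : perm_eq X Y -> uniq (c :: X) -> size X = n ->
    {in c :: X & V, forall a x, a != t * x} ->
    sym_rhs_seq (c :: X) V = sym_rhs_seq (c :: Y) V.
  move=> pXY /andP[_ uX] sX cXV; apply: sym_rhs_seq_cons_congr; rewrite ?sV //.
  move=> x xV; apply: IH; rewrite ?rem_uniq ?size_rem ?sV //.
  by move=> a z aX /mem_rem zV; apply: cXV; rewrite ?inE ?aX ?orbT.
case: U1 pU uU sU hUV => [|x X] pU uU // [sX] hUV.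
case: U2 pU => [/perm_size //|y Y] pU.
have [exy|xy] := eqVneq x y.
  by rewrite -exy in pU *; apply: congr_tail => //; rewrite -(perm_cons x).
have yX : y \in X.
  by have := mem_head y Y; rewrite -(perm_mem pU) inE eq_sym (negbTE xy).
set Zl := rem y X.
have pxX : perm_eq (x :: X) (y :: x :: Zl).
  apply: perm_trans (permEl (perm_catCA [:: x] [:: y] Zl)).
  by rewrite perm_cons; apply: perm_to_rem.
have n_gt0 : (0 < n)%N by rewrite -sX; case: (X) yX.
have xyV : {in [:: x; y] & V, forall a z, a != t * z}.
  by move=> a z; rewrite !inE => /orP[] /eqP-> zV; apply: hUV; rewrite ?inE ?eqxx ?yX ?orbT.
rewrite (congr_tail x X (y :: Zl)) ?perm_to_rem // sym_rhs_seq_swap ?sV //.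
apply: congr_tail.
- by rewrite -(perm_cons y) -(permPl pxX).
- by rewrite -(perm_uniq pxX).
- by rewrite /= size_rem // sX prednK.
by move=> a z; rewrite -(perm_mem pxX); apply: hUV.
Qed.

Lemma lhs_fun_seq n (x y : 'I_n -> R) :
  lhs_fun t x y = tvdm_ratio [seq x i | i <- enum 'I_n] *
                  rhs_seq [seq x i | i <- enum 'I_n] [seq y i | i <- enum 'I_n].
Proof.
rewrite /lhs_fun /tvdm_ratio /rhs_seq -!triprod_enum big1_eq mul1r mulrCA; congr (_ * _).
rewrite -big_split; apply: eq_bigr => i _; rewrite -big_split; apply: eq_bigr => j _.
by rewrite /cross /=; ring.
Qed.

Lemma rhs_fun_seq n (x y : 'I_n -> R) :
  rhs_fun t x y = rhs_seq [seq x i | i <- enum 'I_n] [seq y i | i <- enum 'I_n].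
Proof. by rewrite /rhs_seq -triprod_enum. Qed.

Lemma sum_lhs_fun_perm n (u v : 'I_n -> R) (s : 'S_n) :
  injective u -> injective v -> (forall a b, u a != t * v b) ->
  \sum_(s' : 'S_n) lhs_fun t (fun i => u (s i)) (fun i => v (s' i))
  = tvdm_ratio [seq u (s i) | i <- enum 'I_n] *
    sym_rhs_seq [seq u i | i <- enum 'I_n] [seq v i | i <- enum 'I_n].
Proof.
move=> u_inj v_inj huv; under eq_bigr do rewrite lhs_fun_seq.
rewrite -mulr_sumr (sum_perm_permutations (rhs_seq _) v_inj); congr (_ * _).
apply: sym_rhs_seq_perm.
- exact: perm_eq_map_perm.
- by rewrite map_inj_uniq ?enum_uniq // => i j /u_inj/perm_inj.
- by rewrite map_inj_uniq ?enum_uniq.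
- by rewrite !size_map.
by move=> a z /mapP[i _ ->] /mapP[j _ ->].
Qed.

End RationalIdentities.

Theorem lemma3p8 (R : fieldType) (n : nat) (t : R) (u v : 'I_n -> R)
  (ht : t != 1)
  (hu : injective u) (hv : injective v)
  (huv : forall a b : 'I_n, u a != t * v b) :
  \sum_(s : 'S_n) \sum_(s' : 'S_n) lhs_fun t (fun i => u (s i)) (fun i => v (s' i))
  = qpoch t n / (1 - t) ^+ n *
    \sum_(s' : 'S_n) rhs_fun t u (fun i => v (s' i)).
Proof.
have uU : uniq [seq u i | i <- enum 'I_n] by rewrite map_inj_uniq ?enum_uniq.
under eq_bigr do rewrite sum_lhs_fun_perm //.
rewrite -mulr_suml (sum_perm_permutations (tvdm_ratio t) hu) -/(sym_tvdm_ratio _ _).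
rewrite sym_tvdm_ratio_uniq // size_map size_enum_ord.
under [in RHS]eq_bigr do rewrite rhs_fun_seq.
rewrite (sum_perm_permutations (rhs_seq t _) hv) qpoch_tfactorial.
rewrite [(1 - t) ^+ n * _]mulrC mulfK //.
by rewrite expf_neq0 // subr_eq0 eq_sym.
Qed.
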